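(* Let $k_1,k_2,k_3\ge2$ be integers and $M=S^2(k_1,k_2,k_3)$. For $N_1,N_2,N_3\in\mathbb{Z}_{\ge0}\cup\{\infty\}$ let $\mathcal{G}_{N_1,N_2,N_3}$ be the submodule of $\mathcal{S}(M)$ generated by the elements $S_{l_1}(a_1)S_{l_2}(a_2)S_{l_3}(a_3)$ with $0\le l_i\le N_i$. Then $\mathcal{G}_{k_1,k_2,\infty}=\mathcal{G}_{k_1,k_2,k_3}$.
   Context: $\mathcal{S}(M)$ is the Kauffman bracket skein module of $M$ over $\mathbb{Z}[A^{\pm1}]$. $S^2(k_1,k_2,k_3)$ is the Seifert manifold $\Sigma_{0,0}((k_1,1),(k_2,1),(k_3,1))$. $S_n$ are Chebyshev polynomials of the second kind ($S_0=1,S_1=x,S_{n+1}=xS_n-S_{n-1}$). $a_1,a_2,a_3$ are the three boundary-parallel curves of $\Sigma_{0,3}$, where $\Sigma_{0,3}\times I$ is the genus-two handlebody forming one side of the vertical Heegaard splitting of $M$, pushed into $M$; in $\mathcal{S}(M)$ these satisfy the relations that, in the symbol notation $s_i^n=S_n(a_i)$ (with $s_i^{-1}=0$, $s_i^n=-s_i^{-n-2}$ for $n\le-2$), the elements $R_{13}(n_1,n_2,n_3)-R_{13}(-n_1+k_1,n_2,-n_3+k_3)$ and $R_{23}(n_1,n_2,n_3)-R_{23}(n_1,-n_2+k_2,-n_3+k_3)$ vanish for all $n_i\in\mathbb{Z}$, where $R_{13}(n_1,n_2,n_3)=-A^{-n_1-n_3-2}s_1^{n_1}s_2^{n_2}s_3^{n_3}-A^{-n_1-n_3+2}s_1^{n_1-2}s_2^{n_2}s_3^{n_3-2}-A^{-n_1-n_3}s_1^{n_1-1}s_2^{n_2+1}s_3^{n_3-1}-A^{-n_1-n_3}s_1^{n_1-1}s_2^{n_2-1}s_3^{n_3-1}$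 and $R_{23}(n_1,n_2,n_3)=-A^{-n_2-n_3-2}s_1^{n_1}s_2^{n_2}s_3^{n_3}-A^{-n_2-n_3+2}s_1^{n_1}s_2^{n_2-2}s_3^{n_3-2}-A^{-n_2-n_3}s_1^{n_1+1}s_2^{n_2-1}s_3^{n_3-1}-A^{-n_2-n_3}s_1^{n_1-1}s_2^{n_2-1}s_3^{n_3-1}$ (and these generate all relations among the $S_{l_1}(a_1)S_{l_2}(a_2)S_{l_3}(a_3)$, which span $\mathcal{S}(M)$). *)

From HB Require Import structures.
From mathcomp Require Import all_boot all_order all_algebra.
Set Implicit Arguments. Unset Strict Implicit. Unset Printing Implicit Defensive.
Import Order.TTheory GRing.Theory Num.Theory.
Local Open Scope ring_scope.

(* The ground ring Z[A^{+-1}] is realised inside the fraction field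
   F = Frac(Z[A]) as the subring of elements p(A) / A^d. *)
Definition F := {fraction {poly int}}.
Definition Avar : F := tofrac ('X : {poly int}).
Definition Apow (z : int) : F := Avar ^ z.
Definition laurent (x : F) : Prop :=
  exists (p : {poly int}) (d : nat), x = tofrac p / Avar ^+ d.

(* Free module on the symbols S_{l1}(a1) S_{l2}(a2) S_{l3}(a3), l_i >= 0:
   an element is given by its coefficient function on N^3. *)
Definition V := nat * nat * nat -> F.
Definition basis (l : nat * nat * nat) : V :=
  fun m => if m == l then 1 else 0.

(* s^n = S_n(a): s^n (n >= 0), s^{-1} = 0, s^n = - s^{-n-2} (n <= -2) *)
Definition symc (n : int) : int :=
  if 0 <= n then 1 else if n == -1 then 0 else -1.
Definition symi (n : int) : nat :=
  if 0 <= n then absz n else absz (- n - 2).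
Definition mono (n1 n2 n3 : int) : V :=
  fun m => (symc n1 * symc n2 * symc n3)%:~R * basis (symi n1, symi n2, symi n3) m.

Definition R13 (n1 n2 n3 : int) : V := fun m =>
  - Apow (- n1 - n3 - 2) * mono n1 n2 n3 m
  - Apow (- n1 - n3 + 2) * mono (n1 - 2) n2 (n3 - 2) m
  - Apow (- n1 - n3) * mono (n1 - 1) (n2 + 1) (n3 - 1) m
  - Apow (- n1 - n3) * mono (n1 - 1) (n2 - 1) (n3 - 1) m.

Definition R23 (n1 n2 n3 : int) : V := fun m =>
  - Apow (- n2 - n3 - 2) * mono n1 n2 n3 m
  - Apow (- n2 - n3 + 2) * mono n1 (n2 - 2) (n3 - 2) m
  - Apow (- n2 - n3) * mono (n1 + 1) (n2 - 1) (n3 - 1) m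
  - Apow (- n2 - n3) * mono (n1 - 1) (n2 - 1) (n3 - 1) m.

Definition relgen (k1 k2 k3 : nat) (v : V) : Prop :=
  exists n1 n2 n3 : int,
    v = (fun m => R13 n1 n2 n3 m - R13 (- n1 + k1%:Z) n2 (- n3 + k3%:Z) m)
 \/ v = (fun m => R23 n1 n2 n3 m - R23 n1 (- n2 + k2%:Z) (- n3 + k3%:Z) m).

Definition lspan (P : V -> Prop) (x : V) : Prop :=
  exists (n : nat) (c : 'I_n -> F) (g : 'I_n -> V),
    (forall i, laurent (c i) /\ P (g i)) /\
    (forall m, x m = \sum_(i < n) c i * g i m).

(* N = None stands for infinity *)
Definition bounded (N : option nat) (l : nat) : bool :=
  if N is Some n then (l <= n)%N else true.

(* x represents an element of the submodule G_{N1,N2,N3} of the skein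
   module S(S^2(k1,k2,k3)) = (free module) / (relations) *)
Definition inG (k1 k2 k3 : nat) (N1 N2 N3 : option nat) (x : V) : Prop :=
  lspan (fun v => (exists l1 l2 l3, [/\ bounded N1 l1, bounded N2 l2,
                      bounded N3 l3 & v = basis (l1, l2, l3)])
                  \/ relgen k1 k2 k3 v) x.

(** The relations of [S^2(k1,k2,k3)] let one lower the third index: for
    [c > k3] and [b < k2], the difference [R13(a,b,c) - R13(k1-a,b,k3-c)]
    contains [S_a(a1) S_b(a2) S_c(a3)] with the unit coefficient [-A^(-a-c-2)],
    and every other symbol occurring in it has first index at most [k1],
    second index at most [k2] and third index below [c]; for [a < k1] the
    relation [R23] works symmetrically.  In the corner [a = k1, b = k2] the
    only bad symbol is [S_(k1-1) S_(k2+1) S_(c-1)] (its mirror in the partner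
    relation has first index [-1], hence vanishes), and it is in turn the
    leading symbol of an [R23] relation of the same kind.  Induction on [c]
    then puts every [S_a S_b S_c] with [a <= k1], [b <= k2] into
    [G_{k1,k2,k3}]. *)
From HB Require Import structures.
From mathcomp Require Import all_boot all_order all_algebra.
From mathcomp Require Import zify.
Set Implicit Arguments. Unset Strict Implicit. Unset Printing Implicit Defensive.
Import Order.TTheory GRing.Theory Num.Theory.
Local Open Scope ring_scope.

Lemma Avar_neq0 : Avar != 0.
Proof. by rewrite /Avar tofrac_eq0 polyX_eq0. Qed.

Lemma ApowNK (z : int) : Apow (- z) * Apow z = 1.
Proof. by rewrite /Apow -expfzDr ?Avar_neq0 // addNr expr0z. Qed.

Lemma laurent1 : laurent 1.
Proof. by exists 1, 0%N; rewrite tofrac1 expr0 invr1 mulr1. Qed.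

Lemma laurentM a b : laurent a -> laurent b -> laurent (a * b).
Proof.
move=> [p [d ->]] [q [e ->]]; exists (p * q), (d + e)%N.
by rewrite tofracM exprD invfM mulrACA.
Qed.

Lemma laurentN a : laurent a -> laurent (- a).
Proof. by move=> [p [d ->]]; exists (- p), d; rewrite tofracN mulNr. Qed.

Lemma laurent_int (z : int) : laurent z%:~R.
Proof. by exists z%:~R, 0%N; rewrite expr0 invr1 mulr1 rmorph_int. Qed.

Lemma laurent_Apow (z : int) : laurent (Apow z).
Proof.
rewrite /Apow; case: z => n.
  by exists ('X ^+ n), 0%N; rewrite expr0 invr1 mulr1 tofracXn.
by exists 1, n.+1; rewrite tofrac1 mul1r.
Qed.

Section LaurentSpan.
Variable P : V -> Prop.

Lemma lspan_ext x y : (forall m, x m = y m) -> lspan P x -> lspan P y.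
Proof. by move=> exy [n [c [g [Pg Ex]]]]; exists n, c, g; split=> // m; rewrite -exy. Qed.

Lemma lspan0 : lspan P (fun _ => 0).
Proof.
exists 0%N, (fun _ => 0), (fun _ _ => 0); split; first by case.
by move=> m; rewrite big_ord0.
Qed.

Lemma lspan_gen v : P v -> lspan P v.
Proof.
move=> Pv; exists 1%N, (fun _ => 1), (fun _ => v); split=> [_|m].
  by split=> //; apply: laurent1.
by rewrite big_ord1 mul1r.
Qed.

Lemma lspanD x y : lspan P x -> lspan P y -> lspan P (fun m => x m + y m).
Proof.
move=> [n1 [c1 [g1 [Pg1 Ex]]]] [n2 [c2 [g2 [Pg2 Ey]]]].
exists (n1 + n2)%N, (fun i => match split i with inl j => c1 j | inr j => c2 j end),
  (fun i => match split i with inl j => g1 j | inr j => g2 j end); split.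
  by move=> i; case: (split i).
move=> m; rewrite big_split_ord /= Ex Ey; congr (_ + _); apply: eq_bigr => i _.
  by rewrite (unsplitK (inl i)).
by rewrite (unsplitK (inr i)).
Qed.

Lemma lspanZ c x : laurent c -> lspan P x -> lspan P (fun m => c * x m).
Proof.
move=> lc [n [c1 [g1 [Pg1 Ex]]]]; exists n, (fun i => c * c1 i), g1; split.
  by move=> i; have [lci ?] := Pg1 i; split=> //; apply: laurentM.
by move=> m; rewrite Ex mulr_sumr; apply: eq_bigr => i _; rewrite mulrA.
Qed.

Lemma lspanN x : lspan P x -> lspan P (fun m => - x m).
Proof.
move=> Px; apply: lspan_ext (lspanZ (laurentN laurent1) Px) => m.
by rewrite mulN1r.
Qed.

Lemma lspanB x y : lspan P x -> lspan P y -> lspan P (fun m => x m - y m).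
Proof. by move=> Px Py; apply: lspanD Px (lspanN Py). Qed.

Lemma lspanBr x y : lspan P (fun m => x m - y m) -> lspan P y -> lspan P x.
Proof. by move=> Pxy Py; apply: lspan_ext (lspanD Pxy Py) => m; rewrite subrK. Qed.

Lemma lspan_Apow_inv (z : int) x : lspan P (fun m => - Apow z * x m) -> lspan P x.
Proof.
move=> Px; apply: lspan_ext (lspanZ (laurentN (laurent_Apow (- z))) Px) => m.
by rewrite mulrA mulrNN ApowNK mul1r.
Qed.

End LaurentSpan.

Lemma lspan_of_gens (P Q : V -> Prop) x :
  (forall v, P v -> lspan Q v) -> lspan P x -> lspan Q x.
Proof.
move=> PQ [n [c [g [Pg Ex]]]]; elim: n c g Pg x Ex => [|n IHn] c g Pg x Ex.
  by apply: lspan_ext (lspan0 Q) => m; rewrite Ex big_ord0.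
have [lc /PQ Qg] := Pg ord_max.
apply: lspan_ext (lspanD (IHn _ _ (fun i => Pg (widen_ord (leqnSn n) i)) _ (fun m => erefl))
                         (lspanZ lc Qg)) => m.
by rewrite Ex big_ord_recr.
Qed.

Definition Rform (z : int) (x y u w : V) : V := fun m =>
  - Apow (z - 2) * x m - Apow (z + 2) * y m - Apow z * u m - Apow z * w m.

Lemma R13E n1 n2 n3 : R13 n1 n2 n3 = Rform (- n1 - n3) (mono n1 n2 n3)
  (mono (n1 - 2) n2 (n3 - 2)) (mono (n1 - 1) (n2 + 1) (n3 - 1))
  (mono (n1 - 1) (n2 - 1) (n3 - 1)).
Proof. by []. Qed.

Lemma R23E n1 n2 n3 : R23 n1 n2 n3 = Rform (- n2 - n3) (mono n1 n2 n3)
  (mono n1 (n2 - 2) (n3 - 2)) (mono (n1 + 1) (n2 - 1) (n3 - 1))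
  (mono (n1 - 1) (n2 - 1) (n3 - 1)).
Proof. by []. Qed.

Section RformSpan.
Variable P : V -> Prop.

Lemma lspan_Rform z x y u w : lspan P x -> lspan P y -> lspan P u -> lspan P w ->
  lspan P (Rform z x y u w).
Proof.
move=> Px Py Pu Pw; rewrite /Rform.
have lA t := laurent_Apow t.
exact: lspanB (lspanB (lspanB (lspanZ (laurentN (lA _)) Px) (lspanZ (lA _) Py))
                      (lspanZ (lA _) Pu)) (lspanZ (lA _) Pw).
Qed.

Lemma lspan_Rform_lead z x y u w : lspan P (Rform z x y u w) ->
  lspan P y -> lspan P u -> lspan P w -> lspan P x.
Proof.
move=> Pr Py Pu Pw; apply: (@lspan_Apow_inv _ (z - 2)).
have lA t := laurent_Apow t.
by apply: lspanBr (lspanBr (lspanBr Pr (lspanZ (lA _) Pw)) (lspanZ (lA _) Pu))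
                  (lspanZ (lA _) Py).
Qed.

Lemma lspan_mono n1 n2 n3 :
  lspan P (basis (symi n1, symi n2, symi n3)) -> lspan P (mono n1 n2 n3).
Proof. exact: lspanZ (laurent_int _). Qed.

Lemma lspan_mono_m1 n2 n3 : lspan P (mono (-1) n2 n3).
Proof. by apply: lspan_ext (lspan0 P) => m; rewrite /mono !mul0r. Qed.

End RformSpan.

Lemma mono_nat (a b c : nat) m : mono a b c m = basis (a, b, c) m.
Proof. by rewrite /mono mul1r. Qed.

Lemma symi_le (B : nat) (n : int) :
  (0 < B)%N -> - B%:Z - 2 <= n <= B%:Z -> (symi n <= B)%N.
Proof. by rewrite /symi; case: ifP => n_ge0; lia. Qed.

Lemma symi_lt (B : nat) (n : int) :
  (1 < B)%N -> - B%:Z - 1 <= n < B%:Z -> (symi n < B)%N.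
Proof. by rewrite /symi; case: ifP => n_ge0; lia. Qed.

Section Relations.
Variables (k1 k2 k3 : nat) (N1 N2 N3 : option nat).

Let G := inG k1 k2 k3 N1 N2 N3.
Let Gm n1 n2 n3 := G (mono n1 n2 n3).

Lemma inG_relgen v : relgen k1 k2 k3 v -> G v.
Proof. by move=> rv; apply: lspan_gen; right. Qed.

Lemma inG_lead13 n1 n2 n3 :
  Gm (n1 - 2) n2 (n3 - 2) -> Gm (n1 - 1) (n2 + 1) (n3 - 1) ->
  Gm (n1 - 1) (n2 - 1) (n3 - 1) ->
  Gm (- n1 + k1%:Z) n2 (- n3 + k3%:Z) ->
  Gm (- n1 + k1%:Z - 2) n2 (- n3 + k3%:Z - 2) ->
  Gm (- n1 + k1%:Z - 1) (n2 + 1) (- n3 + k3%:Z - 1) ->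
  Gm (- n1 + k1%:Z - 1) (n2 - 1) (- n3 + k3%:Z - 1) -> Gm n1 n2 n3.
Proof.
move=> G2 G3 G4 G1' G2' G3' G4'.
have Grel : G (fun m => R13 n1 n2 n3 m - R13 (- n1 + k1%:Z) n2 (- n3 + k3%:Z) m).
  by apply: inG_relgen; exists n1, n2, n3; left.
have G' : G (R13 (- n1 + k1%:Z) n2 (- n3 + k3%:Z)).
  by rewrite R13E; apply: lspan_Rform.
have G1 := lspanBr Grel G'; rewrite R13E in G1.
exact: lspan_Rform_lead G1 G2 G3 G4.
Qed.

Lemma inG_lead23 n1 n2 n3 :
  Gm n1 (n2 - 2) (n3 - 2) -> Gm (n1 + 1) (n2 - 1) (n3 - 1) ->
  Gm (n1 - 1) (n2 - 1) (n3 - 1) ->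
  Gm n1 (- n2 + k2%:Z) (- n3 + k3%:Z) ->
  Gm n1 (- n2 + k2%:Z - 2) (- n3 + k3%:Z - 2) ->
  Gm (n1 + 1) (- n2 + k2%:Z - 1) (- n3 + k3%:Z - 1) ->
  Gm (n1 - 1) (- n2 + k2%:Z - 1) (- n3 + k3%:Z - 1) -> Gm n1 n2 n3.
Proof.
move=> G2 G3 G4 G1' G2' G3' G4'.
have Grel : G (fun m => R23 n1 n2 n3 m - R23 n1 (- n2 + k2%:Z) (- n3 + k3%:Z) m).
  by apply: inG_relgen; exists n1, n2, n3; right.
have G' : G (R23 n1 (- n2 + k2%:Z) (- n3 + k3%:Z)).
  by rewrite R23E; apply: lspan_Rform.
have G1 := lspanBr Grel G'; rewrite R23E in G1.
exact: lspan_Rform_lead G1 G2 G3 G4.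
Qed.

End Relations.

Section Reduction.
Variables k1 k2 k3 : nat.
Hypotheses (k1_gt0 : (0 < k1)%N) (k2_gt0 : (0 < k2)%N) (k3_gt0 : (0 < k3)%N).

Let G := inG k1 k2 k3 (Some k1) (Some k2) (Some k3).

Lemma inG_basis a b c : (a <= k1)%N -> (b <= k2)%N -> G (basis (a, b, c)).
Proof.
elim/ltn_ind: c a b => c IHc a b ha hb.
have [c_le|c_gt] := leqP c k3.
  by apply: lspan_gen; left; exists a, b, c.
have Gm n1 n2 n3 : - k1%:Z - 2 <= n1 <= k1%:Z -> - k2%:Z - 2 <= n2 <= k2%:Z ->
    - c%:Z - 1 <= n3 < c%:Z -> G (mono n1 n2 n3).
  move=> h1 h2 h3; apply: lspan_mono; apply: IHc.
  - by apply: symi_lt h3; lia.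
  - exact: symi_le h1.
  - exact: symi_le h2.
apply: lspan_ext (mono_nat a b c) _.
have [b_lt|b_eq] := ltnP b k2.
  by apply: inG_lead13; apply: Gm; lia.
have [a_lt|a_eq] := ltnP a k1.
  by apply: inG_lead23; apply: Gm; lia.
have Gcorner : G (mono (a%:Z - 1) (b%:Z + 1) (c%:Z - 1)).
  by apply: inG_lead23; apply: Gm; lia.
have Gvanish : G (mono (- a%:Z + k1%:Z - 1) (b%:Z + 1) (- c%:Z + k3%:Z - 1)).
  by rewrite (_ : - a%:Z + k1%:Z - 1 = -1); [apply: lspan_mono_m1 | lia].
by apply: inG_lead13; [| exact: Gcorner | | | | exact: Gvanish |]; apply: Gm; lia.
Qed.

End Reduction.

Theorem lemma5p1 (k1 k2 k3 : nat) :
  (2 <= k1)%N -> (2 <= k2)%N -> (2 <= k3)%N ->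
  forall x : V,
    inG k1 k2 k3 (Some k1) (Some k2) None x <->
    inG k1 k2 k3 (Some k1) (Some k2) (Some k3) x.
Proof.
move=> hk1 hk2 hk3 x; split; apply: lspan_of_gens => v.
  case=> [[l1 [l2 [l3 [h1 h2 _ ->]]]] | rv]; last exact: inG_relgen.
  by apply: inG_basis => //; lia.
case=> [[l1 [l2 [l3 [h1 h2 _ ->]]]] | rv]; last exact: inG_relgen.
by apply: lspan_gen; left; exists l1, l2, l3.
Qed.
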